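(* Let $0=t_0<t_1<\dots<t_n=1$ be a grid. Consider the following random procedure. 1. Draw $X_{t_n}\sim p_{t_n}$ and $\boldsymbol\tau_{t_n}\sim j_{t_n}(\cdot\mid X_{t_n})$. 2. For $i=n-1,\dots,0$: - draw $X_0'\sim p_{0|t_{i+1}}(\cdot\mid X_{t_{i+1}},\boldsymbol\tau_{t_{i+1}})$ (equivalently, from the masked-diffusion denoiser evaluated at $\tilde{\mathbf x}_{t_{i+1}}(\boldsymbol\tau_{t_{i+1}})$); - draw $X_{t_i}\sim q_{t_i|0,t_{i+1}}(\cdot\mid X_0',X_{t_{i+1}})$ (the UDM bridge; for $t_i=0$ this means $X_{t_0}=X_0'$); - draw $\boldsymbol\tau_{t_i}\sim j_{t_i|0}(\cdot\mid X_0',X_{t_i})$. Then the law of $(X_{t_0},\dots,X_{t_n})$ is the UDM reverse-chain law $$p_{t_n}(\mathbf x_{t_n})\prod_{i=1}^np_{t_{i-1}|t_i}(\mathbf x_{t_{i-1}}\mid\mathbf x_{t_i}).$$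
   Context: **UDM setup.** - Let $K\ge2$, $L\ge1$ and $\mathsf V=\{1,\dots,K\}$. Tokens are identified with the standard basis vectors of $\mathbb R^K$, and $\mathbf 1$ is the all-ones vector. - $\mathsf X=\mathsf V^L$. $p_0$ is a distribution on $\mathsf X$. - The schedule $\alpha:[0,1]\to[0,1]$ is continuously differentiable and strictly decreasing, with $\alpha_0=1$ and $\alpha_1=0$. Set $\alpha_{t|s}=\alpha_t/\alpha_s$. - UDM forward kernel: $q_{t|s}(\mathbf x_t\mid\mathbf x_s)=\prod_\ell\langle\mathbf x_t^\ell,\alpha_{t|s}\mathbf x_s^\ell+(1-\alpha_{t|s})\mathbf 1/K\rangle$. - $p_t(\mathbf x)=\sum_{\mathbf x_0}p_0(\mathbf x_0)q_{t|0}(\mathbf x\mid\mathbf x_0)$. - UDM reverse kernel: $p_{s|t}(\mathbf x_s\mid\mathbf x_t)=p_s(\mathbf x_s)q_{t|s}(\mathbf x_t\mid\mathbf x_s)/p_t(\mathbf x_t)$. - UDM bridge: $q_{s|0,t}(\mathbf x_s\mid\mathbf x_0,\mathbf x_t)=q_{t|s}(\mathbf x_t\mid\mathbf x_s)q_{s|0}(\mathbf x_s\mid\mathbf x_0)/q_{t|0}(\mathbf x_t\mid\mathbf x_0)$ for $s>0$, and $q_{0|0,t}(\mathbf x\mid\mathbf x_0,\mathbf x_t)=\mathbf 1\{\mathbf x=\mathbf x_0\}$. **Transition times.** - $\boldsymbol\tau\in[0,1]^L$ has density $j(\boldsymbol\tau)=\prod_\ell(-\alpha'_{\boldsymbol\tau^\ell})$,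 i.e. its coordinates are i.i.d. with $\mathbb P(\boldsymbol\tau^\ell<t)=1-\alpha_t$. - $q_{t|0}(\mathbf x_t\mid\mathbf x_0,\boldsymbol\tau)=\prod_\ell\mathrm{Cat}\big(\mathbf x_t^\ell;\mathbf 1\{\boldsymbol\tau^\ell>t\}\mathbf x_0^\ell+\mathbf 1\{\boldsymbol\tau^\ell\le t\}\mathbf 1/K\big)$. - Joint forward law: $X_0\sim p_0$ and $\boldsymbol\tau\sim j$ independent, and $X_t\mid(X_0,\boldsymbol\tau)\sim q_{t|0}(\cdot\mid X_0,\boldsymbol\tau)$. The marginal of $X_t$ is $p_t$. - $j_t(\cdot\mid\mathbf x_t)$ is the conditional density of $\boldsymbol\tau$ given $X_t=\mathbf x_t$. - $p_{0|t}(\mathbf x_0\mid\mathbf x_t,\boldsymbol\tau)\propto p_0(\mathbf x_0)q_{t|0}(\mathbf x_t\mid\mathbf x_0,\boldsymbol\tau)$ is the conditional law of $X_0$ given $(X_t,\boldsymbol\tau)$. - Masked sequence: $\tilde{\mathbf x}_t(\boldsymbol\tau)^\ell=\mathbf x_t^\ell$ if $\boldsymbol\tau^\ell>t$, and equals a mask symbol otherwise. **Resampling density.** - $j_{s|0}(\boldsymbol\tau_s\mid\mathbf x_0,\mathbf x_s):=j(\boldsymbol\tau_s)q_{s|0}(\mathbf x_s\mid\mathbf x_0,\boldsymbol\tau_s)/q_{s|0}(\mathbf x_s\mid\mathbf x_0)$. - Explicitly it is the product over $\ell$ of: - $\frac{-\alpha'_{\boldsymbol\tau_s^\ell}}{1-\alpha_s}\mathbf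 1\{\boldsymbol\tau_s^\ell\le s\}$ if $\mathbf x_s^\ell\ne\mathbf x_0^\ell$; - $\frac{-\alpha'_{\boldsymbol\tau_s^\ell}}{1+(K-1)\alpha_s}\big(\mathbf 1\{\boldsymbol\tau_s^\ell\le s\}+K\mathbf 1\{\boldsymbol\tau_s^\ell>s\}\big)$ if $\mathbf x_s^\ell=\mathbf x_0^\ell$. *)

From HB Require Import structures.
From mathcomp Require Import all_boot all_order all_algebra.
From mathcomp Require Import all_classical all_reals all_analysis.
Set Implicit Arguments. Unset Strict Implicit. Unset Printing Implicit Defensive.
Import Order.TTheory GRing.Theory Num.Theory.
Import numFieldNormedType.Exports.
Local Open Scope classical_set_scope.
Local Open Scope ring_scope.

Section UDM.
Variable R : realType.
Variables K L : nat.
Variable alpha : R -> R.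
Variable p0 : {ffun 'I_L -> 'I_K} -> R.

Local Notation X := {ffun 'I_L -> 'I_K}.

Definition alpha_ts (t s : R) : R := alpha t / alpha s.

(* UDM forward kernel q_{t|s}(xt | xs) ; <e_a, a e_b + (1-a) 1/K> written out *)
Definition q_fwd (t s : R) (xt xs : X) : R :=
  \prod_(l < L) (alpha_ts t s * (xt l == xs l)%:R + (1 - alpha_ts t s) / K%:R).

Definition p_marg (t : R) (x : X) : R := \sum_(x0 : X) p0 x0 * q_fwd t 0 x x0.

Definition p_rev (s t : R) (xs xt : X) : R :=
  p_marg s xs * q_fwd t s xt xs / p_marg t xt.

Definition q_bridge (s t : R) (xs x0 xt : X) : R :=
  if s == 0 then (xs == x0)%:R
  else q_fwd t s xt xs * q_fwd s 0 xs x0 / q_fwd t 0 xt x0.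

(* density j of the transition times on [0,1]^L *)
Definition j_dens (tau : 'I_L -> R) : R := \prod_(l < L) (- derive1 alpha (tau l)).

(* q_{t|0}(xt | x0, tau) ; Cat(x; v) = <x, v> *)
Definition q_tau (t : R) (xt x0 : X) (tau : 'I_L -> R) : R :=
  \prod_(l < L) (if t < tau l then (xt l == x0 l)%:R else K%:R^-1).

Definition j_cond (t : R) (xt : X) (tau : 'I_L -> R) : R :=
  j_dens tau * (\sum_(x0 : X) p0 x0 * q_tau t xt x0 tau) / p_marg t xt.

Definition p0_cond (t : R) (xt : X) (tau : 'I_L -> R) (x0 : X) : R :=
  p0 x0 * q_tau t xt x0 tau / (\sum_(y : X) p0 y * q_tau t xt y tau).

Definition j_resample (s : R) (x0 xs : X) (tau : 'I_L -> R) : R :=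
  j_dens tau * q_tau s xs x0 tau / q_fwd s 0 xs x0.

Fixpoint iterint (m : nat) (f : seq R -> \bar R) : \bar R :=
  match m with
  | 0 => f [::]
  | m'.+1 => (\int[@lebesgue_measure R]_(u in `[0%R, 1%R]) iterint m' (fun s => f (u :: s)))%E
  end.

Definition int_tau (g : ('I_L -> R) -> \bar R) : \bar R :=
  iterint L (fun s => g (fun l => nth 0 s l)).

(* Contribution of the steps producing X_{t_{k-1}},...,X_{t_0} (and the
   tau's drawn along the way), given X_{t_k} = x k and tau_{t_k} = tau. *)
Fixpoint proc_rest (t : nat -> R) (x : nat -> X) (k : nat) (tau : 'I_L -> R)
  : \bar R :=
  match k with
  | 0 => 1%E
  | k'.+1 =>
    (\sum_(y : X)
       ((p0_cond (t k'.+1) (x k'.+1) tau y * q_bridge (t k') (t k'.+1) (x k') y (x k'.+1))%:E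
        * int_tau (fun tau' => (j_resample (t k') y (x k') tau')%:E
                               * proc_rest t x k' tau')))%E
  end.

Definition proc_law (t : nat -> R) (x : nat -> X) (n : nat) : \bar R :=
  int_tau (fun tau => ((p_marg (t n) (x n) * j_cond (t n) (x n) tau)%:E
                        * proc_rest t x n tau)%E).

Definition rev_law (t : nat -> R) (x : nat -> X) (n : nat) : R :=
  p_marg (t n) (x n) * \prod_(1 <= i < n.+1) p_rev (t i.-1) (t i) (x i.-1) (x i).

End UDM.

From HB Require Import structures.
From mathcomp Require Import all_boot all_order all_algebra.
From mathcomp Require Import all_classical all_reals all_analysis.
From mathcomp Require Import ring lra measurable_realfun.
Import Order.TTheory GRing.Theory Num.Theory.
Import numFieldNormedType.Exports.
Local Open Scope classical_set_scope.
Local Open Scope ring_scope.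
Set Implicit Arguments. Unset Strict Implicit. Unset Printing Implicit Defensive.

(* Given the transition times tau, the forward law q_{t|0}(. | x0, tau) depends
   on tau only through the pattern b of coordinates not yet jumped at time t.
   Under j this pattern has the law W_t(b) of L independent Bernoulli(alpha_t)
   coins, and averaging q_{t|0}(. | x0, b) over W_t gives back q_{t|0}.  So every
   integral over transition times in the procedure collapses to a finite sum
   over patterns, the one-dimensional integrals being the FTC for -alpha'.
   If J_k(b) is the joint weight of the pattern and of X_{t_k} = x_k along the
   procedure, then Bayes' rule for the denoiser, q_{t|0} q_{s|0,t} = q_{t|s} q_{s|0}
   for the bridge and the normalisation of the resampling density give
   sum_b J_{k+1} = q_{t_{k+1}|t_k}(x_{k+1} | x_k) sum_b J_k, with
   sum_b J_0 = p_{t_0}(x_0); dividing by the marginals turns the telescoped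
   product into the reverse chain. *)

Section normalized_sum.
Variables (R : numFieldType) (I : finType).

(* Also valid when all weights vanish, thanks to x / 0 = 0. *)
Lemma mulr_normalized_sum (w F : I -> R) : (forall i, 0 <= w i) ->
  (\sum_i w i) * \sum_i (w i / \sum_j w j) * F i = \sum_i w i * F i.
Proof.
move=> w_ge0; have [w0|wN0] := eqVneq (\sum_i w i) 0.
  rewrite w0 mul0r; symmetry; apply: big1 => i _.
  by rewrite (psumr_eq0P (fun i _ => w_ge0 i) w0) ?mul0r.
by rewrite big_distrr; apply: eq_bigr => i _ /=; field.
Qed.

End normalized_sum.

Section patterns.
Variables (R : realType) (K L : nat) (alpha : R -> R) (p0 : {ffun 'I_L -> 'I_K} -> R).
Local Notation X := {ffun 'I_L -> 'I_K}.
Local Notation B := {ffun 'I_L -> bool}.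
Hypothesis K_gt0 : (0 < K)%N.
Hypothesis alpha0 : alpha 0 = 1.
Hypothesis p0_ge0 : forall y, 0 <= p0 y.
Hypothesis p0_sum1 : \sum_y p0 y = 1.

Definition pattern (t : R) (tau : 'I_L -> R) : B := [ffun l => t < tau l].

Definition q_pattern (xt x0 : X) (b : B) : R :=
  \prod_(l < L) (if b l then (xt l == x0 l)%:R else K%:R^-1).

Definition pattern_weight (t : R) (b : B) : R :=
  \prod_(l < L) (if b l then alpha t else 1 - alpha t).

Definition q_pattern_marg (xt : X) (b : B) : R := \sum_(x0 : X) p0 x0 * q_pattern xt x0 b.

Definition posterior (xt : X) (b : B) (x0 : X) : R :=
  p0 x0 * q_pattern xt x0 b / q_pattern_marg xt b.

Definition resample_avg (s : R) (xs x0 : X) (F : B -> R) : R :=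
  \sum_c (q_pattern xs x0 c / q_fwd alpha s 0 xs x0 * F c) * pattern_weight s c.

Lemma q_tau_pattern t (xt x0 : X) tau : q_tau t xt x0 tau = q_pattern xt x0 (pattern t tau).
Proof. by apply: eq_bigr => l _; rewrite ffunE. Qed.

Lemma q_pattern_ge0 xt x0 b : 0 <= q_pattern xt x0 b.
Proof. by apply: prodr_ge0 => l _; case: (b l); rewrite ?invr_ge0 ler0n. Qed.

Lemma pattern_weight_ge0 t b : 0 <= alpha t <= 1 -> 0 <= pattern_weight t b.
Proof.
by case/andP=> a0 a1; apply: prodr_ge0 => l _; case: (b l); rewrite ?subr_ge0.
Qed.

Lemma sum_pattern_weight_q_pattern t (xt x0 : X) :
  \sum_b pattern_weight t b * q_pattern xt x0 b = q_fwd alpha t 0 xt x0.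
Proof.
rewrite /q_fwd /alpha_ts alpha0 divr1 (eq_bigr (fun l => \sum_(c : bool)
   if c then alpha t * (xt l == x0 l)%:R else (1 - alpha t) / K%:R)); last first.
  by move=> l _; rewrite big_bool.
rewrite bigA_distr_bigA; apply: eq_bigr => b _; rewrite -big_split /=.
by apply: eq_bigr => l _; case: (b l).
Qed.

Lemma q_fwd0_gt0 s (xs x0 : X) : 0 <= alpha s < 1 -> 0 < q_fwd alpha s 0 xs x0.
Proof.
case/andP=> a0 a1; rewrite /q_fwd /alpha_ts alpha0 divr1.
apply: prodr_gt0 => l _; apply: (@lt_le_trans _ _ ((1 - alpha s) / K%:R)).
  by rewrite divr_gt0 ?subr_gt0 ?ltr0n.
by rewrite lerDr mulr_ge0.
Qed.

Lemma q_fwd00 (xs x0 : X) : q_fwd alpha 0 0 xs x0 = (xs == x0)%:R.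
Proof.
rewrite /q_fwd /alpha_ts alpha0 divr1 subrr mul0r.
under eq_bigr do rewrite mul1r addr0.
have [->|] := eqVneq xs x0; first by rewrite big1 // => l _; rewrite eqxx.
case/eqP/ffunP/existsNP => l /eqP xsl.
by rewrite (bigD1 l) //= (negbTE xsl) mul0r.
Qed.

Lemma q_fwd_bridge s t (xs x0 xt : X) : 0 <= alpha t < 1 ->
  q_fwd alpha t 0 xt x0 * q_bridge alpha s t xs x0 xt
  = q_fwd alpha t s xt xs * q_fwd alpha s 0 xs x0.
Proof.
move=> at01; rewrite /q_bridge; have [->|_] := eqVneq s 0.
  by rewrite q_fwd00; case: eqP => [->|]; rewrite ?mulr1 ?mulr0.
by rewrite mulrC divfK // gt_eqF // q_fwd0_gt0.
Qed.

Lemma p_marg_gt0 s (xs : X) : 0 <= alpha s < 1 -> 0 < p_marg alpha p0 s xs.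
Proof.
move=> as01; have q_gt0 y := q_fwd0_gt0 xs y as01.
have terms_ge0 y : true -> 0 <= p0 y * q_fwd alpha s 0 xs y.
  by move=> _; exact: mulr_ge0 (p0_ge0 y) (ltW (q_gt0 y)).
rewrite /p_marg lt0r sumr_ge0 // andbT; apply/eqP => /(psumr_eq0P terms_ge0) terms0.
have p00 y : p0 y = 0 by apply: (mulIf (lt0r_neq0 (q_gt0 y))); rewrite mul0r terms0.
by move/eqP: p0_sum1; rewrite big1 // eq_sym oner_eq0.
Qed.

Lemma sum_pattern_weight_q_pattern_marg t xt (G : B -> R) :
  \sum_b pattern_weight t b * q_pattern_marg xt b * G b
  = \sum_y p0 y * \sum_b pattern_weight t b * q_pattern xt y b * G b.
Proof.
under eq_bigr do rewrite /q_pattern_marg big_distrr big_distrl /=.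
rewrite exchange_big; apply: eq_bigr => y _; rewrite big_distrr.
by apply: eq_bigr => b _ /=; ring.
Qed.

Lemma sum_posterior t xt (H : X -> R) :
  \sum_b pattern_weight t b * q_pattern_marg xt b * (\sum_y posterior xt b y * H y)
  = \sum_y p0 y * q_fwd alpha t 0 xt y * H y.
Proof.
transitivity (\sum_b pattern_weight t b * \sum_y p0 y * q_pattern xt y b * H y).
  apply: eq_bigr => b _; rewrite -mulrA /posterior mulr_normalized_sum //.
  by move=> y; rewrite mulr_ge0 ?q_pattern_ge0.
rewrite (eq_bigr _ (fun b _ => big_distrr _ _ _)) exchange_big; apply: eq_bigr => y _ /=.
rewrite -sum_pattern_weight_q_pattern !big_distrr big_distrl; apply: eq_bigr => b _ /=.
ring.
Qed.

Lemma q_fwd_mul_resample_avg s (xs x0 : X) F : 0 <= alpha s <= 1 ->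
  q_fwd alpha s 0 xs x0 * resample_avg s xs x0 F
  = \sum_c pattern_weight s c * q_pattern xs x0 c * F c.
Proof.
move=> as01; rewrite /resample_avg -sum_pattern_weight_q_pattern //.
rewrite -[RHS](@mulr_normalized_sum _ _ (fun c => pattern_weight s c * q_pattern xs x0 c))
  => [|c]; last first.
  by rewrite mulr_ge0 ?q_pattern_ge0 ?pattern_weight_ge0.
by congr (_ * _); apply: eq_bigr => c _; ring.
Qed.

End patterns.

Section ffun_cons.
Variables (T : finType) (V : nmodType).

Definition ffun_cons m (a : T) (c : {ffun 'I_m -> T}) : {ffun 'I_m.+1 -> T} :=
  [ffun i => if unlift ord0 i is Some j then c j else a].

Lemma ffun_cons0 m a (c : {ffun 'I_m -> T}) : ffun_cons a c ord0 = a.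
Proof. by rewrite ffunE unlift_none. Qed.

Lemma ffun_consS m a (c : {ffun 'I_m -> T}) j : ffun_cons a c (lift ord0 j) = c j.
Proof. by rewrite ffunE liftK. Qed.

Lemma sum_ffun_cons m (F : {ffun 'I_m.+1 -> T} -> V) :
  \sum_b F b = \sum_(a : T) \sum_(c : {ffun 'I_m -> T}) F (ffun_cons a c).
Proof.
rewrite pair_big /= (reindex (fun p : T * {ffun 'I_m -> T} => ffun_cons p.1 p.2)) //=.
exists (fun b : {ffun 'I_m.+1 -> T} => (b ord0, [ffun j => b (lift ord0 j)])).
  move=> [a c] _ /=; rewrite ffun_cons0; congr pair; apply/ffunP => j.
  by rewrite ffunE ffun_consS.
move=> b _; apply/ffunP => i; rewrite ffunE.
by case: unliftP => [j ->|->] //; rewrite ffunE.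
Qed.

End ffun_cons.

Section iterated_threshold_integral.
Variables (R : realType) (g : R -> R) (tm : R) (w : bool -> R).
Hypothesis threshold_integral : forall H : bool -> R,
  (\int[@lebesgue_measure R]_(u in `[0%R, 1%R]) (g u * H (tm < u))%:E
   = (\sum_c H c * w c)%:E)%E.

Lemma iterint_threshold m (f : seq R -> \bar R) (Phi : {ffun 'I_m -> bool} -> R) :
  (forall s, size s = m ->
     f s = ((\prod_(i < m) g (nth 0 s i)) * Phi [ffun i : 'I_m => tm < nth 0 s i])%:E) ->
  iterint m f = (\sum_b Phi b * \prod_(i < m) w (b i))%:E.
Proof.
elim: m f Phi => [|m IH] f Phi fE.
  rewrite /= fE // big_ord0 mul1r (big_pred1 [ffun i : 'I_0 => tm < nth 0 [::] i]).
    by rewrite big_ord0 mulr1.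
  by move=> c; apply/esym/eqP/ffunP => -[].
pose H a := \sum_(c : {ffun 'I_m -> bool}) Phi (ffun_cons a c) * \prod_(i < m) w (c i).
have inner u : iterint m (fun s => f (u :: s)) = (g u * H (tm < u))%:E.
  rewrite (IH _ (fun c => g u * Phi (ffun_cons (tm < u) c))).
    by rewrite /H big_distrr; congr EFin; apply: eq_bigr => c _ /=; ring.
  move=> s sm; rewrite fE /= ?sm // big_ord_recl /=; congr EFin.
  rewrite (_ : [ffun i => _] = ffun_cons (tm < u) [ffun i : 'I_m => tm < nth 0 s i]).
    by under eq_bigr do rewrite add0n; ring.
  by apply/ffunP => i; rewrite !ffunE; case: unliftP => [j ->|->] //; rewrite ffunE.
rewrite /=; under eq_integral => u _ do rewrite inner.
rewrite threshold_integral sum_ffun_cons; congr EFin; apply: eq_bigr => a _.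
rewrite /H big_distrl; apply: eq_bigr => c _ /=.
by rewrite big_ord_recl ffun_cons0; under [in RHS]eq_bigr do rewrite ffun_consS; ring.
Qed.

End iterated_threshold_integral.

Section itv_bigcup.
Variable R : realType.

Lemma itv_oo_bigcup_cc (a b : R) (u v : R^nat) :
  (forall n, a < u n) -> (forall n, v n < b) ->
  u @ \oo --> a -> v @ \oo --> b ->
  `]a, b[%classic = \bigcup_n `[u n, v n]%classic.
Proof.
move=> au vb ua vb'; apply/seteqP; split => [z|z [n _]]; rewrite /= !in_itv /=.
  case/andP=> az zb; near \oo => n; exists n => //.
  rewrite /= in_itv /= !ltW //; near: n.
  - exact: (cvgr_gt _ vb').
  - exact: (cvgr_lt _ ua).
by case/andP=> unz zvn; rewrite (lt_le_trans (au n)) ?(le_lt_trans zvn (vb n)).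
Unshelve. all: by end_near.
Qed.

End itv_bigcup.

Section schedule_integral.
Variables (R : realType) (alpha : R -> R).
Hypothesis alpha_cont : {within `[0, 1], continuous alpha}.
Hypothesis alpha_derivable : forall u, 0 < u < 1 -> derivable alpha u 1.
Hypothesis derive_alpha_cont : {in `]0, 1[, continuous (derive1 alpha)}.
Hypothesis alpha_decr : {in `[0, 1] &, forall a b, a < b -> alpha b < alpha a}.
Hypotheses (alpha0 : alpha 0 = 1) (alpha1 : alpha 1 = 0).

Local Notation mu := (@lebesgue_measure R).

Lemma alpha_lt1 u : 0 < u <= 1 -> alpha u < 1.
Proof.
case/andP=> u0 u1; rewrite -[X in _ < X]alpha0.
by rewrite alpha_decr // !in_itv /= ?lexx ?ler01 ?u1 ?ltW.
Qed.

Lemma alpha_le u v : 0 <= u -> u <= v -> v <= 1 -> alpha v <= alpha u.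
Proof.
move=> u0 uv v1; have [->//|uNv] := eqVneq u v.
have u_in : u \in `[0, 1] by rewrite in_itv /= u0 (le_trans uv v1).
have v_in : v \in `[0, 1] by rewrite in_itv /= v1 (le_trans u0 uv).
by rewrite ltW // alpha_decr // lt_neqAle uNv.
Qed.

Lemma alpha_in01 u : 0 <= u <= 1 -> 0 <= alpha u <= 1.
Proof.
case/andP=> u0 u1; rewrite -[X in X <= _ <= _]alpha1 -[X in _ <= _ <= X]alpha0.
by rewrite !alpha_le.
Qed.

Lemma oppr_derive1_ge0 u : 0 < u < 1 -> 0 <= - derive1 alpha u.
Proof.
move=> u01; rewrite oppr_ge0.
apply: (@decr_derive1_le0_itv R alpha true false 0 1) => //.
- by move=> z; rewrite inE /= in_itv /=; exact: alpha_derivable.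
- by move=> a b ha hb; apply: alpha_decr.
Qed.

Lemma measurable_oppr_derive1 (a b : R) bl br : 0 <= a -> b <= 1 ->
  measurable_fun [set` Interval (BSide bl a) (BSide br b)] (fun u => - derive1 alpha u).
Proof.
move=> a0 b1; apply: (@measurable_funS _ _ _ _ `[a, b]%classic) => //.
  by apply: subset_itv; case: bl; case: br; rewrite bnd_simp.
apply: (@measurable_fun_itv_cc _ _ _ false true).
apply: (@measurable_funS _ _ _ _ (`]0, 1[%classic : set R)) => //.
  by apply: subset_itv; rewrite bnd_simp.
apply: open_continuous_measurable_fun; first exact: interval_open.
by move=> z; rewrite inE => z01; apply: continuousN; exact: derive_alpha_cont.
Qed.

Lemma alpha_continuous_at u : 0 < u < 1 -> {for u, continuous alpha}.
Proof.
by move=> u01; apply/differentiable_continuous/derivable1_diffP/alpha_derivable.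
Qed.

Lemma alpha_cvg_at_right a : 0 <= a < 1 -> alpha x @[x --> a^'+] --> alpha a.
Proof.
case/andP=> a0 a1; have [->|an0] := eqVneq a 0.
  by case/(continuous_within_itvP _ ltr01): alpha_cont.
apply/cvg_at_right_filter/alpha_continuous_at.
by rewrite a1 andbT lt_neqAle eq_sym an0.
Qed.

Lemma alpha_cvg_at_left b : 0 < b <= 1 -> alpha x @[x --> b^'-] --> alpha b.
Proof.
case/andP=> b0 b1; have [->|bn1] := eqVneq b 1.
  by case/(continuous_within_itvP _ ltr01): alpha_cont.
apply/cvg_at_left_filter/alpha_continuous_at.
by rewrite b0 lt_neqAle bn1.
Qed.

Lemma integral_cc_oppr_derive1 c d : 0 < c -> c < d -> d < 1 ->
  (\int[mu]_(u in `[c, d]) (- derive1 alpha u)%:E = (alpha c - alpha d)%:E)%E.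
Proof.
move=> c0 cd d1.
have in01 z : c <= z <= d -> 0 < z < 1.
  by case/andP=> cz zd; rewrite (lt_le_trans c0) ?(le_lt_trans zd).
rewrite (@continuous_FTC2 R _ (- alpha)%R c d cd).
- by rewrite -EFinB /= opprK addrC.
- apply: continuous_in_subspaceT => z; rewrite inE /= in_itv /= => /in01 z01.
  by apply: cvgN; apply: derive_alpha_cont; rewrite in_itv.
- split.
  + move=> z; rewrite in_itv /= => /andP[cz zd].
    by apply/derivableN/alpha_derivable/in01; rewrite !ltW.
  + apply: cvg_at_right_filter; apply: cvgN; apply: alpha_continuous_at.
    by apply: in01; rewrite lexx ltW.
  + apply: cvg_at_left_filter; apply: cvgN; apply: alpha_continuous_at.
    by apply: in01; rewrite lexx ltW.
- move=> z; rewrite in_itv /= => /andP[cz zd]; rewrite derive1N //.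
  by apply/alpha_derivable/in01; rewrite !ltW.
Qed.

(* [alpha'] need not be bounded near 0 and 1, so the FTC is applied on closed
   subintervals and the limit is taken by monotone convergence. *)
Lemma integral_oo_oppr_derive1_exhaust a b (u v : R^nat) : 0 <= a -> b <= 1 ->
  (forall n, a < u n) -> (forall n, v n < b) -> (forall n, u n < v n) ->
  nonincreasing_seq u -> nondecreasing_seq v -> u @ \oo --> a -> v @ \oo --> b ->
  (\int[mu]_(z in `]a, b[) (- derive1 alpha z)%:E = (alpha a - alpha b)%:E)%E.
Proof.
move=> a0 b1 au vb uv u_noninc v_nondec ua vb'.
have u0 n : 0 < u n := le_lt_trans a0 (au n).
have v1 n : v n < 1 := lt_le_trans (vb n) b1.
rewrite (itv_oo_bigcup_cc au vb ua vb').
apply: cvg_unique (ge0_nondecreasing_set_cvg_integral _ _ _ _) _.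
- by [].
- move=> n m nm; rewrite subsetEset; apply: subset_itv; rewrite bnd_simp.
  + exact: u_noninc.
  + exact: v_nondec.
- by move=> n; exact: measurable_itv.
- move=> n; apply/measurable_EFinP.
  exact: (measurable_oppr_derive1 (ltW (u0 n)) (ltW (v1 n))).
- move=> n z; rewrite /= in_itv /= => /andP[uz zv].
  by rewrite lee_fin oppr_derive1_ge0 // (lt_le_trans (u0 n)) ?(le_lt_trans zv).
have -> : (fun n => \int[mu]_(z in `[u n, v n]) (- derive1 alpha z)%:E)%E
    = (fun n => (alpha (u n) - alpha (v n))%:E).
  by apply/funext => n; rewrite integral_cc_oppr_derive1.
have ab : a < b := lt_trans (au 0%N) (lt_trans (uv 0%N) (vb 0%N)).
apply: cvg_EFin; first exact: nearW.
apply: cvgB.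
- apply: (cvg_at_rightP _ _ _).1 => //; apply: alpha_cvg_at_right.
  by rewrite a0 (lt_le_trans ab).
- apply: (cvg_at_leftP _ _ _).1 => //; apply: alpha_cvg_at_left.
  by rewrite b1 (le_lt_trans a0).
Qed.

Lemma integral_oo_oppr_derive1 a b : 0 <= a -> a < b -> b <= 1 ->
  (\int[mu]_(z in `]a, b[) (- derive1 alpha z)%:E = (alpha a - alpha b)%:E)%E.
Proof.
move=> a0 ab b1; pose e := (b - a) / 3.
have e0 : 0 < e by rewrite divr_gt0 ?subr_gt0.
have h_le1 n : harmonic n <= 1 :> R by rewrite /= invf_le1 ?ler1n ?ltr0n.
have h_noninc : nonincreasing_seq (harmonic : R^nat).
  by move=> n m nm; rewrite lef_pV2 ?posrE ?ltr0n // ler_nat.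
apply: (@integral_oo_oppr_derive1_exhaust _ _
  (fun n => a + e * harmonic n) (fun n => b - e * harmonic n)) => //.
- by move=> n; rewrite ltrDl mulr_gt0 ?harmonic_gt0.
- by move=> n; rewrite ltrBlDr ltrDl mulr_gt0 ?harmonic_gt0.
- move=> n; have := ler_piMr (ltW e0) (h_le1 n); have := harmonic_gt0 n.
  have : b - a = 3 * e by rewrite /e; field.
  lra.
- by move=> n m nm; rewrite lerD2l ler_pM2l ?h_noninc.
- by move=> n m nm; rewrite lerD2l lerN2 ler_pM2l ?h_noninc.
- rewrite -[X in _ --> X]addr0 -(mulr0 e); apply: cvgD; first exact: cvg_cst.
  by apply: cvgMl_tmp; exact: cvg_harmonic.
- rewrite -[X in _ --> X]subr0 -(mulr0 e); apply: cvgB; first exact: cvg_cst.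
  by apply: cvgMl_tmp; exact: cvg_harmonic.
Qed.

Lemma integral_itv_oppr_derive1Mr (a b : R) bl br c : 0 <= a -> a <= b -> b <= 1 ->
  (\int[mu]_(u in [set` Interval (BSide bl a) (BSide br b)]) (- derive1 alpha u * c)%:E
    = (c * (alpha a - alpha b))%:E)%E.
Proof.
move=> a0 ab b1.
have mg : measurable_fun `]a, b[%classic (fun u => - derive1 alpha u).
  exact: measurable_oppr_derive1.
rewrite integral_itv_bndoo; last exact/measurable_EFinP/measurable_funM.
have [<-|anb] := eqVneq a b.
  by rewrite set_itv_ge ?integral_set0 ?subrr ?mulr0 // bnd_simp ltxx.
have {}ab : a < b by rewrite lt_neqAle anb.
have g_ge0 z : z \in `]a, b[ -> 0 <= - derive1 alpha z.
  rewrite in_itv /= => /andP[az zb].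
  by rewrite oppr_derive1_ge0 // (le_lt_trans a0 az) (lt_le_trans zb b1).
under eq_integral do rewrite EFinM.
rewrite integralZr //; first by rewrite integral_oo_oppr_derive1 // -EFinM mulrC.
apply/integrableP; split; first exact/measurable_EFinP.
under eq_integral => z /[!inE] /g_ge0 z0 do rewrite gee0_abs ?lee_fin //.
by rewrite integral_oo_oppr_derive1 // ltry.
Qed.

Lemma integral_oppr_derive1_threshold tm (H : bool -> R) : 0 <= tm <= 1 ->
  (\int[mu]_(u in `[0%R, 1%R]) (- derive1 alpha u * H (tm < u))%:E
    = (H true * alpha tm + H false * (1 - alpha tm))%:E)%E.
Proof.
case/andP=> tm0 tm1.
have cover : `[0, 1]%classic = `[0, tm]%classic `|` `]tm, 1]%classic :> set R.
  by rewrite -itv_bndbnd_setU ?bnd_simp.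
have on_left : {in `[0, tm]%classic, forall u,
    - derive1 alpha u * H (tm < u) = - derive1 alpha u * H false}.
  by move=> u /[!inE] /=; rewrite in_itv /= => /andP[_ utm]; rewrite ltNge utm.
have on_right : {in `]tm, 1]%classic, forall u,
    - derive1 alpha u * H (tm < u) = - derive1 alpha u * H true}.
  by move=> u /[!inE] /=; rewrite in_itv /= => /andP[tmu _]; rewrite tmu.
have mg c (l r : R) bl br : 0 <= l -> r <= 1 ->
    measurable_fun [set` Interval (BSide bl l) (BSide br r)] (fun u => - derive1 alpha u * c).
  by move=> l0 r1; apply: measurable_funM; [exact: measurable_oppr_derive1|].
rewrite cover integral_setU //; last 2 first.
- apply/measurable_EFinP/measurable_funU => //; split.
  + apply: (eq_measurable_fun (fun u => - derive1 alpha u * H false)); last exact: mg.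
    by move=> u /on_left ->.
  + apply: (eq_measurable_fun (fun u => - derive1 alpha u * H true)); last exact: mg.
    by move=> u /on_right ->.
- rewrite disj_set2E; apply/eqP/seteqP; split => // u /= [].
  by rewrite !in_itv /= => /andP[_ utm] /andP[tmu _]; lra.
under eq_integral => u /on_left -> do [].
under [X in (_ + X)%E]eq_integral => u /on_right -> do [].
rewrite !integral_itv_oppr_derive1Mr // -EFinD alpha0 alpha1; congr EFin; ring.
Qed.

Lemma int_tau_pattern_weight L tm (Phi : {ffun 'I_L -> bool} -> R) : 0 <= tm <= 1 ->
  int_tau (fun tau => (j_dens alpha tau * Phi (pattern tm tau))%:E)
  = (\sum_b Phi b * pattern_weight alpha tm b)%:E.
Proof.
move=> tm01; apply: (@iterint_threshold _ (fun u => - derive1 alpha u) tm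
  (fun b => if b then alpha tm else 1 - alpha tm)).
  by move=> H; rewrite big_bool integral_oppr_derive1_threshold.
by move=> s _; congr (EFin (_ * Phi _)); apply/ffunP => l; rewrite !ffunE.
Qed.

End schedule_integral.

Section grid.
Variables (R : realType) (n : nat) (t : nat -> R).
Hypotheses (t0 : t 0%N = 0) (tn : t n = 1).
Hypothesis t_incr : forall k, (k < n)%N -> t k < t k.+1.

Lemma grid_le i j : (i <= j)%N -> (j <= n)%N -> t i <= t j.
Proof.
elim: j => [|j IH]; first by rewrite leqn0 => /eqP ->.
rewrite leq_eqVlt => /orP[/eqP -> //|ij] jn.
exact: le_trans (IH ij (ltnW jn)) (ltW (t_incr jn)).
Qed.

Lemma grid_in01 k : (k <= n)%N -> 0 <= t k <= 1.
Proof. by move=> kn; rewrite -t0 -tn !grid_le. Qed.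

Lemma grid_in_oc k : (0 < k <= n)%N -> 0 < t k <= 1.
Proof.
case/andP=> k0 kn; have /andP[_ ->] := grid_in01 kn.
by rewrite -t0 (lt_le_trans (t_incr (leq_trans k0 kn))) ?grid_le.
Qed.

End grid.

Section reverse_chain.
Variables (R : realType) (K L : nat) (alpha : R -> R) (p0 : {ffun 'I_L -> 'I_K} -> R).
Variables (n : nat) (t : nat -> R) (x : nat -> {ffun 'I_L -> 'I_K}).
Local Notation X := {ffun 'I_L -> 'I_K}.
Local Notation B := {ffun 'I_L -> bool}.
Local Notation pattern := (@pattern R L).
Local Notation q_pattern := (@q_pattern R K L).
Local Notation q_pattern_marg := (@q_pattern_marg R K L p0).
Local Notation posterior := (@posterior R K L p0).
Local Notation pattern_weight := (@pattern_weight R L alpha).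
Local Notation resample_avg := (@resample_avg R K L alpha).
Hypothesis K_gt0 : (0 < K)%N.
Hypothesis alpha0 : alpha 0 = 1.
Hypothesis p0_ge0 : forall y, 0 <= p0 y.
Hypothesis p0_sum1 : \sum_y p0 y = 1.
Hypothesis alpha_grid : forall k, (k <= n)%N -> 0 <= alpha (t k) <= 1.
Hypothesis alpha_grid_lt1 : forall k, (0 < k <= n)%N -> alpha (t k) < 1.
Hypothesis int_tau_pattern : forall k, (k <= n)%N -> forall Phi : B -> R,
  int_tau (fun tau => (j_dens alpha tau * Phi (pattern (t k) tau))%:E)
  = (\sum_b Phi b * pattern_weight (t k) b)%:E.

Fixpoint proc_rest_pattern (k : nat) (b : B) : R :=
  if k is k'.+1 then
    \sum_y posterior (x k) b y * (q_bridge alpha (t k') (t k) (x k') y (x k)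
           * resample_avg (t k') (x k') y (proc_rest_pattern k'))
  else 1.

Lemma proc_restE k tau : (k <= n)%N ->
  proc_rest alpha p0 t x k tau = (proc_rest_pattern k (pattern (t k) tau))%:E.
Proof.
elim: k tau => [//|k IH] tau kn /=; rewrite -sumEFin; apply: eq_bigr => y _.
rewrite (_ : int_tau _ = (resample_avg (t k) (x k) y (proc_rest_pattern k))%:E).
  rewrite -EFinM -mulrA /p0_cond /posterior q_tau_pattern.
  by under eq_bigr do rewrite q_tau_pattern.
rewrite -int_tau_pattern ?(ltnW kn) //; congr int_tau; apply/funext => tau'.
by rewrite IH ?(ltnW kn) // /j_resample q_tau_pattern -EFinM !mulrA.
Qed.

Lemma alpha_grid_succ k : (k < n)%N -> 0 <= alpha (t k.+1) < 1.
Proof. by move=> kn; have /andP[-> _] := alpha_grid kn; rewrite alpha_grid_lt1. Qed.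

Lemma sum_proc_rest_pattern_succ k : (k < n)%N ->
  \sum_b pattern_weight (t k.+1) b * q_pattern_marg (x k.+1) b * proc_rest_pattern k.+1 b
  = q_fwd alpha (t k.+1) (t k) (x k.+1) (x k)
    * \sum_c pattern_weight (t k) c * q_pattern_marg (x k) c * proc_rest_pattern k c.
Proof.
move=> kn; rewrite sum_posterior // sum_pattern_weight_q_pattern_marg big_distrr.
apply: eq_bigr => y _ /=; rewrite -q_fwd_mul_resample_avg ?alpha_grid ?(ltnW kn) //.
have bridge := q_fwd_bridge K_gt0 alpha0 (t k) (x k) y (x k.+1) (alpha_grid_succ kn).
by rewrite mulrA -[p0 y * _ * _]mulrA bridge; ring.
Qed.

Lemma sum_proc_rest_pattern k : (k <= n)%N ->
  \sum_b pattern_weight (t k) b * q_pattern_marg (x k) b * proc_rest_pattern k b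
  = p_marg alpha p0 (t k) (x k)
    * \prod_(1 <= i < k.+1) p_rev alpha p0 (t i.-1) (t i) (x i.-1) (x i).
Proof.
elim: k => [_|k IH kn].
  rewrite big_geq // mulr1 sum_pattern_weight_q_pattern_marg; apply: eq_bigr => y _.
  by under eq_bigr do rewrite mulr1; rewrite sum_pattern_weight_q_pattern.
have pN0 := lt0r_neq0 (p_marg_gt0 K_gt0 alpha0 p0_ge0 p0_sum1 (x k.+1) (alpha_grid_succ kn)).
rewrite sum_proc_rest_pattern_succ // IH ?(ltnW kn) // [in RHS]big_nat_recr //= /p_rev.
by field.
Qed.

Lemma proc_law_rev_law : (0 < n)%N -> proc_law alpha p0 t x n = (rev_law alpha p0 t x n)%:E.
Proof.
move=> n_gt0; have an01 : 0 <= alpha (t n) < 1.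
  by have /andP[-> _] := alpha_grid (leqnn n); rewrite alpha_grid_lt1 // n_gt0 leqnn.
have pN0 := lt0r_neq0 (p_marg_gt0 K_gt0 alpha0 p0_ge0 p0_sum1 (x n) an01).
pose Phi b := q_pattern_marg (x n) b * proc_rest_pattern n b.
have integrandE : (fun tau => ((p_marg alpha p0 (t n) (x n) * j_cond alpha p0 (t n) (x n) tau)%:E
                               * proc_rest alpha p0 t x n tau)%E)
    = fun tau => (j_dens alpha tau * Phi (pattern (t n) tau))%:E.
  apply/funext => tau; rewrite proc_restE // -EFinM /j_cond /Phi /q_pattern_marg.
  by under eq_bigr do rewrite q_tau_pattern; congr EFin; field.
rewrite /proc_law integrandE int_tau_pattern // /rev_law -sum_proc_rest_pattern //.
by congr EFin; apply: eq_bigr => b _; rewrite /Phi; ring.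
Qed.

End reverse_chain.

Theorem mainTheorem10 (R : realType) (K L : nat) (alpha : R -> R)
    (p0 : {ffun 'I_L -> 'I_K} -> R) (n : nat) (t : nat -> R)
    (x : nat -> {ffun 'I_L -> 'I_K}) :
  (2 <= K)%N -> (1 <= L)%N ->
  {within `[0, 1], continuous alpha} ->
  (forall u, 0 < u < 1 -> derivable alpha u 1) ->
  {in `]0, 1[, continuous (derive1 alpha)} ->
  {in `[0, 1] &, forall a b, a < b -> alpha b < alpha a} ->
  alpha 0 = 1 -> alpha 1 = 0 ->
  (forall y, 0 <= p0 y) -> \sum_(y : {ffun 'I_L -> 'I_K}) p0 y = 1 ->
  t 0%N = 0 -> t n = 1 -> (forall k, (k < n)%N -> t k < t k.+1) ->
  proc_law alpha p0 t x n = (rev_law alpha p0 t x n)%:E.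
Proof.
move=> K2 _ alpha_cont alpha_der dalpha_cont alpha_decr alpha0 alpha1 p0_ge0 p0_sum1
  t0 tn t_incr.
have n_gt0 : (0 < n)%N.
  by case: n tn t_incr => [|//]; rewrite t0 => /eqP; rewrite eq_sym oner_eq0.
apply: proc_law_rev_law => //.
- exact: leq_trans K2.
- by move=> k kn; apply/(alpha_in01 alpha_decr alpha0 alpha1)/(grid_in01 t0 tn t_incr).
- by move=> k kn; apply/(alpha_lt1 alpha_decr alpha0)/(grid_in_oc t0 tn t_incr).
- move=> k kn Phi; apply: int_tau_pattern_weight => //.
  exact: (grid_in01 t0 tn t_incr).
Qed.
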